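(* Let $M\ge1$ and $k\in\mathfrak{L}_M$. Then \[ V(k):=\beta(\kappa^{-1}(k))=\bigl\{b\in\mathbb{Z}^{M+1}\,\bigl|\,\min\{\mathbb{1},\tilde{k}\}\leq b\leq\min\{k,\tilde{k}\}\bigr\}; \] equivalently, $V(k)=V_0\times V_1\times\cdots\times V_M$, where $V_n=\bigl\{\min\{1,\tilde{k}_n\},\min\{1,\tilde{k}_n\}+1,\ldots,\min\{k_n,\tilde{k}_n\}\bigr\}$ for $0\leq n\leq M$.
   Context: Fix depths $z_{-1}<z_0<\cdots<z_M$. A (reflection) scattering sequence is a finite sequence $\mathsf{p}=(\mathsf{p}_0,\ldots,\mathsf{p}_L)$ with $L\geq 2$, $\mathsf{p}_0=\mathsf{p}_L=z_{-1}$, $\mathsf{p}_i\in\{z_0,\ldots,z_M\}$ for $1\le i\le L-1$, and for every $0\le i\le L-1$ there is $-1\le j\le M-1$ with $\{\mathsf{p}_i,\mathsf{p}_{i+1}\}=\{z_j,z_{j+1}\}$; $\mathsf{S}_M$ is the set of these. For $\mathsf{p}\in\mathsf{S}_M$ and $0\le n\le M$, let $k_n$ be the number of maximal runs of consecutive indices $i$ with $\mathsf{p}_i\in\{z_n,\ldots,z_M\}$, and $b_n$ the number of those runs of length at least $2$ (equivalently, containing an index $i$ with $\mathsf{p}_i=z_{n+1}$). Then $\kappa(\mathsf{p})=(k_0,\ldots,k_M)$ (transit count vector) and $\beta(\mathsf{p})=(b_0,\ldots,b_M)$ (branch count vector), so $\kappa,\beta:\mathsf{S}_M\to\mathbb{Z}^{M+1}$.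 $\mathfrak{L}_M=\{(k_0,\ldots,k_M)\in\mathbb{Z}_{\ge0}^{M+1}: k_0=1\text{ and for all }n\le M-1,\ k_n=0\Rightarrow k_{n+1}=0\}$. For $k=(k_0,\ldots,k_M)$, $\tilde{k}=(k_1,\ldots,k_M,0)$; $\mathbb{1}=(1,\ldots,1)$; $\min$ and $\le$ are entrywise. *)

From HB Require Import structures.
From mathcomp Require Import all_boot all_order all_algebra.
Set Implicit Arguments. Unset Strict Implicit. Unset Printing Implicit Defensive.
Import Order.TTheory GRing.Theory Num.Theory.

(* Depths z_{-1} < z_0 < ... < z_M are encoded by their index shifted by one:
   the natural number j+1 stands for z_j, so 0 stands for z_{-1} and
   M.+1 stands for z_M.  Only the order/adjacency structure of the depths
   matters for the definitions below. *)

Definition adjacent (x y : nat) : bool := (x == y.+1) || (y == x.+1).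

Definition scattering (M : nat) (p : seq nat) : Prop :=
  [/\ 3 <= size p,                          (* L >= 2 *)
      nth 0 p 0 = 0, last 0 p = 0,
      (forall i, 0 < i < (size p).-1 -> 0 < nth 0 p i <= M.+1)
    & (forall i, i < (size p).-1 -> adjacent (nth 0 p i) (nth 0 p i.+1))].

Fixpoint run_lengths (s : seq bool) : seq nat :=
  match s with
  | [::] => [::]
  | true :: t =>
      let r := run_lengths t in
      match t with
      | true :: _ => (head 0 r).+1 :: behead r
      | _ => 1 :: r
      end
  | false :: t => run_lengths t
  end.

(* Maximal runs of indices i with p_i in {z_n,...,z_M}. *)
Definition runs_at (n : nat) (p : seq nat) : seq nat :=
  run_lengths [seq n.+1 <= x | x <- p].

Definition transit_n (n : nat) (p : seq nat) : nat := size (runs_at n p).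
Definition branch_n (n : nat) (p : seq nat) : nat :=
  count (fun l => 2 <= l) (runs_at n p).

Definition kappa (M : nat) (p : seq nat) : M.+1.-tuple int :=
  [tuple Posz (transit_n i p) | i < M.+1].
Definition beta (M : nat) (p : seq nat) : M.+1.-tuple int :=
  [tuple Posz (branch_n i p) | i < M.+1].

Definition in_LM (M : nat) (k : M.+1.-tuple int) : Prop :=
  (forall n : 'I_M.+1, 0 <= tnth k n)%R /\
  nth 0%R k 0 = 1%R /\
  (forall n, n < M -> nth 0%R k n = 0%R -> nth 0%R k n.+1 = 0%R).

(* k~ = (k_1,...,k_M,0):  its n-th entry. *)
Definition ktilde (M : nat) (k : M.+1.-tuple int) (n : nat) : int :=
  nth 0%R k n.+1.

Definition V (M : nat) (k : M.+1.-tuple int) : M.+1.-tuple int -> Prop :=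
  fun b => exists p, scattering M p /\ kappa M p = k /\ beta M p = b.

From HB Require Import structures.
From mathcomp Require Import all_boot all_order all_algebra zify.
Import Order.TTheory GRing.Theory Num.Theory.
Set Implicit Arguments. Unset Strict Implicit. Unset Printing Implicit Defensive.

(* Write a scattering sequence as a walk [0 :: t] on depth indices.  A run at
   level n is entered exactly at a step n -> n.+1, so k_n counts these ascents,
   and the run has length at least 2 exactly when it is entered by a double
   ascent n -> n.+1 -> n.+2.  Hence b_n <= k_n, b_n <= k_{n+1}, and b_n > 0 as
   soon as level n.+1 is reached at all: this is the window
   min(1, k~) <= b <= min(k, k~).  Conversely, a walk with prescribed counts is
   built from the deepest level up: the k_{n+1} runs at level n.+1 are
   distributed over k_n runs at level n, b_n of which receive at least one of
   them, and are glued together by the value n.+1. *)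

Section RunLengths.

Implicit Types (s t : seq bool) (pr : bool).

Fixpoint run_starts pr s : nat :=
  if s is x :: t then (~~ pr && x) + run_starts x t else 0.

Fixpoint long_run_starts pr s : nat :=
  if s is x :: ((y :: _) as t) then [&& ~~ pr, x & y] + long_run_starts x t else 0.

Lemma run_lengths_true_true t : run_lengths [:: true, true & t] =
  (head 0 (run_lengths (true :: t))).+1 :: behead (run_lengths (true :: t)).
Proof. by []. Qed.

Lemma long_run_starts_cons pr x t :
  long_run_starts pr (x :: t) = [&& ~~ pr, x & head false t] + long_run_starts x t.
Proof. by case: t => [|y t] //=; rewrite !andbF. Qed.

Lemma run_lengths_true t :
  exists l r, run_lengths (true :: t) = l.+1 :: r /\ (0 < l) = head false t.
Proof.
case: t => [|[] t]; do 2!eexists; split => //.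
by case: t => [|[] t].
Qed.

Lemma size_run_lengths s : size (run_lengths s) = run_starts false s.
Proof.
elim: s => [|[] t IH] //.
case: t IH => [|[] t] IH //; last by move: IH => /= ->.
have [l [r [E _]]] := run_lengths_true t.
by rewrite run_lengths_true_true E /= in IH *; rewrite IH.
Qed.

Lemma count_run_lengths s :
  count (leq 2) (run_lengths s) = long_run_starts false s.
Proof.
elim: s => [|[] t IH] //; last by rewrite long_run_starts_cons andbF.
case: t IH => [|[] t] IH //.
have [l [r [E hl]]] := run_lengths_true t.
rewrite run_lengths_true_true E !long_run_starts_cons /= -hl in IH *.
lia.
Qed.

Lemma run_lengths_cat_false s t :
  run_lengths (s ++ false :: t) = run_lengths s ++ run_lengths t.
Proof.
elim: s => [|[] s IH] //.
case: s IH => [|[] s] IH //.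
  have [l [r [E _]]] := run_lengths_true s.
  by rewrite 2!cat_cons run_lengths_true_true -cat_cons IH run_lengths_true_true E.
by move: IH => /= ->.
Qed.

Lemma run_lengths_all_true s : all id s -> s != [::] -> run_lengths s = [:: size s].
Proof.
elim: s => [|x s IH] // /andP [-> all_s] _.
case: s IH all_s => [|y s] // IH /andP [y_true all_s]; rewrite y_true in IH *.
by rewrite run_lengths_true_true IH //= y_true.
Qed.

End RunLengths.

Section DepthPaths.

Implicit Types (n x y : nat) (p t : seq nat).

Fixpoint ascents n x p : nat :=
  if p is y :: t then ((x == n) && (y == n.+1)) + ascents n y t else 0.

Fixpoint double_ascents n x p : nat :=
  if p is y :: ((z :: _) as t) then
    [&& x == n, y == n.+1 & z == n.+2] + double_ascents n y t
  else 0.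

Lemma double_ascents_cons n x y t : double_ascents n x (y :: t) =
  [&& x == n, y == n.+1 & head 0 t == n.+2] + double_ascents n y t.
Proof. by case: t => [|z t] //=; rewrite !andbF. Qed.

Lemma run_starts_depths n x p : path adjacent x p ->
  run_starts (n < x) [seq n < y | y <- p] = ascents n x p.
Proof.
elim: p x => [|y t IH] x //= /andP [hxy hp]; rewrite IH //; congr (_ + _).
move: hxy; rewrite /adjacent.
by case: (ltngtP x n) => [h|h|->]; case: (ltngtP y n.+1) => [h'|h'|->] //=; lia.
Qed.

Lemma long_run_starts_depths n x p : path adjacent x p ->
  long_run_starts (n < x) [seq n < y | y <- p] = double_ascents n x p.
Proof.
elim: p x => [|y t IH] x // /andP [hxy hp].
rewrite map_cons long_run_starts_cons double_ascents_cons IH //; congr (_ + _).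
case: t {IH} hp => [|z t] /=; first by rewrite !andbF.
case/andP=> hyz _; move: hxy hyz; rewrite /adjacent.
case: (ltngtP x n) => [h|h|->]; case: (ltngtP y n.+1) => [h'|h'|->] //=;
  by case: (ltngtP z n.+2) => [h''|h''|->] //=; lia.
Qed.

Lemma double_ascents_le_ascents n x p : double_ascents n x p <= ascents n.+1 x p.
Proof.
suff tail_bound y t : double_ascents n x (y :: t) <= ascents n.+1 y t.
  by case: p => [|y t] //=; apply: leq_trans (tail_bound y t) (leq_addl _ _).
elim: t x y => [|z t IH] x y //.
rewrite double_ascents_cons /=; apply: leq_add (IH y z).
by case: (x == n).
Qed.

(* An ascent n.+1 -> n.+2 completes a double ascent from n, unless it is the
   first step of a walk starting at n.+1. *)
Lemma double_ascents_gt0 n x p : path adjacent x p -> x <= n.+1 -> 0 < ascents n.+1 x p ->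
  0 < double_ascents n x p + ((x == n.+1) && (head 0 p == n.+2)).
Proof.
elim: p x => [|y t IH] x // /andP [hxy hp] hx.
rewrite double_ascents_cons [ascents _ _ _]/= [head _ _]/=.
have [/andP [/eqP -> /eqP ->]|no_jump] := boolP ((x == n.+1) && (y == n.+2)).
  by rewrite addn1.
have hy : y <= n.+1 by move: hxy no_jump; rewrite /adjacent; lia.
have := IH y hp hy; move: hxy no_jump; rewrite /adjacent; lia.
Qed.

Lemma ascents_eq0 n x p : all (fun y => y <= n) p -> ascents n x p = 0.
Proof.
elim: p x => [|y t IH] x //= /andP [hy ht].
by rewrite IH //; lia.
Qed.

End DepthPaths.

Lemma scattering_walk M p : scattering M p ->
  exists2 t, p = 0 :: t & path adjacent 0 t && all (fun y => y <= M.+1) t.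
Proof.
case=> size_p head_p last_p inner_p adj_p.
case: p size_p head_p last_p inner_p adj_p => [|x t] //= size_t -> last_t inner_t adj_t.
exists t => //; apply/andP; split; first by apply/(pathP 0) => i; apply: adj_t.
apply/(all_nthP 0) => i lt_i.
have [lt_i1|ge_i1] := ltnP i.+1 (size t); first by have /= := inner_t i.+1; lia.
have -> : i = (size t).-1 by lia.
by rewrite nth_last last_t.
Qed.

Lemma transit_n_cons0 n t : path adjacent 0 t -> transit_n n (0 :: t) = ascents n 0 t.
Proof. by move=> ht; rewrite /transit_n /runs_at size_run_lengths -run_starts_depths. Qed.

Lemma branch_n_cons0 n t : path adjacent 0 t -> branch_n n (0 :: t) = double_ascents n 0 t.
Proof.
move=> ht; rewrite /branch_n /runs_at count_run_lengths map_cons.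
by rewrite long_run_starts_cons -long_run_starts_depths.
Qed.

Lemma branch_window M p n : scattering M p ->
  minn 1 (transit_n n.+1 p) <= branch_n n p <= minn (transit_n n p) (transit_n n.+1 p).
Proof.
case/scattering_walk => t -> /andP [ht _].
have le_k : branch_n n (0 :: t) <= transit_n n (0 :: t) := count_size _ _.
rewrite !transit_n_cons0 // branch_n_cons0 // in le_k *.
have le_k1 := double_ascents_le_ascents n 0 t.
have := double_ascents_gt0 ht (leq0n n.+1).
lia.
Qed.

Lemma transit_n_eq0 M p n : scattering M p -> M < n -> transit_n n p = 0.
Proof.
case/scattering_walk => t -> /andP [ht le_t] lt_Mn.
by rewrite transit_n_cons0 // ascents_eq0 //; apply: sub_all le_t => y; lia.
Qed.

Lemma nth_kappa M p n : scattering M p -> nth 0%R (kappa M p) n = Posz (transit_n n p).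
Proof.
move=> hp; have [lt_n|ge_n] := ltnP n M.+1.
  by rewrite -(tnth_nth 0%R _ (Ordinal lt_n)) tnth_mktuple.
by rewrite nth_default ?size_tuple // (transit_n_eq0 hp).
Qed.

Section Chunks.

Variable T : eqType.
Implicit Types (s : seq T) (c K : nat).

Definition chunks c K s : seq (seq T) :=
  if c is c'.+1 then [seq [:: x] | x <- take c' s] ++ drop c' s :: nseq (K - c) [::]
  else nseq K [::].

Lemma flatten_nseq_nil K : flatten (nseq K ([::] : seq T)) = [::].
Proof. by elim: K. Qed.

Lemma flatten_chunks c K s : (s != [::] -> 0 < c) -> flatten (chunks c K s) = s.
Proof.
case: c => [|c] /= s_gt0.
  by case: s s_gt0 => [_|x s /(_ isT)] //; apply: flatten_nseq_nil.
rewrite flatten_cat /= flatten_nseq_nil cats0 -[in RHS](cat_take_drop c s).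
by congr (_ ++ _); elim: (take c s) => //= x t ->.
Qed.

Lemma size_chunks c K s : c <= K -> c <= size s -> size (chunks c K s) = K.
Proof.
case: c => [|c] le_cK le_cs /=; first by rewrite size_nseq.
by rewrite size_cat /= size_map size_nseq size_take le_cs; lia.
Qed.

Lemma count_chunks c K s : c <= size s -> count (fun b => b != [::]) (chunks c K s) = c.
Proof.
case: c => [|c] le_cs /=; first by elim: K.
rewrite count_cat count_map /= -size_eq0 size_drop subn_eq0 -ltnNge le_cs.
rewrite (eq_count (a2 := predT)) // count_predT size_take le_cs.
by elim: (K - c.+1) => [|j] /=; lia.
Qed.

End Chunks.

Definition excursion (M n : nat) (r : seq nat) : bool :=
  if r is x :: t then
    [&& x == n.+1, last x t == n.+1, path adjacent x t
      & all (fun y => n < y <= M.+1) (x :: t)]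
  else false.

Definition glue (a : nat) (L : seq (seq nat)) : seq nat :=
  a :: flatten [seq r ++ [:: a] | r <- L].

Definition runs_of (m : nat) (L : seq (seq nat)) : seq nat :=
  flatten [seq runs_at m r | r <- L].

Lemma runs_of_cons m r L : runs_of m (r :: L) = runs_at m r ++ runs_of m L.
Proof. by []. Qed.

Lemma runs_of_cat m L1 L2 : runs_of m (L1 ++ L2) = runs_of m L1 ++ runs_of m L2.
Proof. by rewrite /runs_of map_cat flatten_cat. Qed.

Lemma runs_at_cat m s x t : x <= m -> runs_at m (s ++ x :: t) = runs_at m s ++ runs_at m t.
Proof.
by move=> le_xm; rewrite /runs_at map_cat map_cons ltnNge le_xm run_lengths_cat_false.
Qed.

Lemma runs_at_glue m a L : a <= m -> runs_at m (glue a L) = runs_of m L.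
Proof.
move=> le_am; have drop_a s : runs_at m (a :: s) = runs_at m s := runs_at_cat [::] s le_am.
rewrite /glue drop_a; elim: L => [|r L IH] //=.
by rewrite -catA runs_at_cat // IH.
Qed.

Lemma runs_of_map_glue m a G : a <= m -> runs_of m (map (glue a) G) = runs_of m (flatten G).
Proof.
move=> le_am; elim: G => [|L G IH] //=.
by rewrite runs_of_cons runs_of_cat -IH runs_at_glue.
Qed.

Lemma runs_at_excursion M n r : excursion M n r -> runs_at n r = [:: size r].
Proof.
case: r => [|x t] // /and4P [_ _ _ bounds].
rewrite /runs_at run_lengths_all_true ?size_map // all_map.
by apply: sub_all bounds => y /andP [].
Qed.

Lemma runs_of_excursions M n L : all (excursion M n) L -> runs_of n L = map size L.
Proof.
elim: L => [|r L IH] // /andP [exc_r exc_L].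
by rewrite runs_of_cons IH // (runs_at_excursion exc_r).
Qed.

Lemma last_glue a (L : seq (seq nat)) : last a (flatten [seq r ++ [:: a] | r <- L]) = a.
Proof. by elim: L => [|r L IH] //=; rewrite last_cat last_cat. Qed.

Lemma path_glue M a (L : seq (seq nat)) :
  all (excursion M a) L -> path adjacent a (flatten [seq r ++ [:: a] | r <- L]).
Proof.
elim: L => [|[|x t] L IH] //= /andP [/and4P [/eqP -> last_t path_t _] exc_L].
rewrite cat_path last_cat /= IH // andbT /adjacent eqxx orbT /= cat_path path_t /=.
by rewrite (eqP last_t) eqxx.
Qed.

Lemma excursion_glue M n L :
  n <= M -> all (excursion M n.+1) L -> excursion M n (glue n.+1 L).
Proof.
move=> le_nM exc_L; rewrite /= eqxx last_glue eqxx (path_glue exc_L) /= ltnSn ltnS le_nM /=.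
elim: L exc_L => [|r L IH] //= /andP [exc_r exc_L].
rewrite all_cat all_cat IH //= ltnSn ltnS le_nM !andbT.
case: r exc_r => [|x t] // /and4P [_ _ _ bounds].
by apply: sub_all bounds => y /andP [lt_ny ->]; rewrite ltnW.
Qed.

Lemma size_glue_gt1 a L : (1 < size (glue a L)) = (L != [::]).
Proof. by case: L => [|r L] //=; rewrite size_cat size_cat /= addn1 addSn. Qed.

Section Levels.

Variables (M : nat) (kn bn : nat -> nat).
Hypothesis kn_top : kn M.+1 = 0.
Hypothesis bn_window :
  forall n, n <= M -> minn 1 (kn n.+1) <= bn n <= minn (kn n) (kn n.+1).

(* [L] lists the runs at level [n] of the walk under construction; they
   already realise the prescribed counts at every level [m >= n]. *)
Definition realizes n (L : seq (seq nat)) : Prop :=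
  [/\ all (excursion M n) L, size L = kn n &
      forall m, n <= m <= M ->
        size (runs_of m L) = kn m /\ count (leq 2) (runs_of m L) = bn m].

Lemma realizes_top : realizes M (nseq (kn M) [:: M.+1]).
Proof.
have exc : all (excursion M M) (nseq (kn M) [:: M.+1]).
  by elim: (kn M) => //= k ->; rewrite !eqxx leqnn.
split=> //; first by rewrite size_nseq.
move=> m le_m; have -> : m = M by lia.
rewrite (runs_of_excursions exc) size_map size_nseq; split=> //.
have := bn_window (leqnn M); rewrite kn_top minn0 leqn0 => /andP [_ /eqP ->].
by elim: (kn M).
Qed.

Lemma realizes_glue n L : n < M -> realizes n.+1 L ->
  realizes n (map (glue n.+1) (chunks (bn n) (kn n) L)).
Proof.
move=> lt_nM [exc_L size_L runs_L].
have /andP [lo hi] := bn_window (ltnW lt_nM).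
have le_bk : bn n <= kn n by lia.
have le_bs : bn n <= size L by rewrite size_L; lia.
have flat : flatten (chunks (bn n) (kn n) L) = L.
  by apply: flatten_chunks; rewrite -size_eq0 size_L; lia.
have exc : all (excursion M n) (map (glue n.+1) (chunks (bn n) (kn n) L)).
  rewrite all_map; apply/allP => g g_in /=; apply: excursion_glue; first exact: ltnW.
  by apply/allP => r r_in; apply: (allP exc_L); rewrite -flat; apply/flattenP; exists g.
split=> //; first by rewrite size_map size_chunks.
move=> m /andP [le_nm le_mM]; have [<-|ne_nm] := eqVneq n m.
  rewrite (runs_of_excursions exc) !size_map size_chunks // count_map count_map.
  rewrite (eq_count (a2 := fun g => g != [::])) ?count_chunks // => g /=.
  by rewrite size_glue_gt1.
have lt_nm : n < m by rewrite ltn_neqAle ne_nm.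
by rewrite runs_of_map_glue // flat; apply: runs_L; rewrite lt_nm.
Qed.

Lemma realizes_exists n : n <= M -> exists L, realizes n L.
Proof.
move=> le_nM; rewrite -(subKn le_nM).
elim: (M - n) (leq_subr n M) => [|d IH] le_dM.
  by rewrite subn0; exists (nseq (kn M) [:: M.+1]); apply: realizes_top.
have [L real_L] := IH (ltnW le_dM).
have E : M - d = (M - d.+1).+1 by lia.
by rewrite E in real_L; eexists; apply: realizes_glue real_L; lia.
Qed.

End Levels.

Lemma scattering_glue M r : excursion M 0 r -> scattering M (glue 0 [:: r]).
Proof.
move=> exc_r; have := @path_glue M 0 [:: r]; rewrite /= exc_r cats0 => /(_ isT) path_r.
rewrite /glue /= cats0.
case: r exc_r path_r => [|x t] // /and4P [_ _ _ bounds] path_r.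
split=> //.
- by rewrite /= size_cat /= addn1.
- by rewrite /= last_cat.
- move=> [|i] // lt_i.
  have lt_ix : i < size (x :: t) by move: lt_i; rewrite /= size_cat /=; lia.
  change (0 < nth 0 ((x :: t) ++ [:: 0]) i <= M.+1).
  by rewrite nth_cat lt_ix; move/(all_nthP 0): bounds; apply.
- by move=> i lt_i; move/(pathP 0): path_r; apply.
Qed.

Lemma scattering_of_windows M (kn bn : nat -> nat) : kn 0 = 1 -> kn M.+1 = 0 ->
  (forall n, n <= M -> minn 1 (kn n.+1) <= bn n <= minn (kn n) (kn n.+1)) ->
  exists2 p, scattering M p &
    forall n, n <= M -> transit_n n p = kn n /\ branch_n n p = bn n.
Proof.
move=> kn0 kn_top window.
have [[|r [|r' L]] [exc size_L runs_L]] := realizes_exists kn_top window (leq0n M);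
  rewrite kn0 // in size_L.
exists (glue 0 [:: r]); first by apply: scattering_glue; move: exc => /andP [].
by move=> n le_nM; rewrite /transit_n /branch_n runs_at_glue //; apply: runs_L.
Qed.

Theorem proposition1 (M : nat) (hM : 1 <= M) (k : M.+1.-tuple int)
    (hk : in_LM k) (b : M.+1.-tuple int) :
  V k b <->
  (forall n : 'I_M.+1,
     (Order.min 1%R (ktilde k n) <= tnth b n)%R /\
     (tnth b n <= Order.min (tnth k n) (ktilde k n))%R).
Proof.
have k_ge0 i : (0 <= nth 0%R k i)%R.
  have [lt_iM|ge_iM] := ltnP i M.+1; last by rewrite nth_default ?size_tuple.
  by have := hk.1 (Ordinal lt_iM); rewrite (tnth_nth 0%R).
split=> [[p [scat_p [<- <-]]] n | windows].
  rewrite /ktilde tnth_mktuple (tnth_nth 0%R) !(nth_kappa _ scat_p).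
  by have := branch_window n scat_p; lia.
have b_window n : n <= M -> (0 <= nth 0%R b n)%R /\
    minn 1 `|nth 0%R k n.+1| <= `|nth 0%R b n| <= minn `|nth 0%R k n| `|nth 0%R k n.+1|.
  move=> le_nM; have := windows (Ordinal (le_nM : n < M.+1)).
  rewrite /ktilde !(tnth_nth 0%R) /=; have := k_ge0 n; have := k_ge0 n.+1.
  move: (nth 0%R k n) (nth 0%R k n.+1) (nth 0%R b n) => x y z; lia.
have k0 : `|nth 0%R k 0| = 1 by rewrite hk.2.1.
have k_top : `|nth 0%R k M.+1| = 0 by rewrite nth_default ?size_tuple.
have [p scat_p counts] :=
  scattering_of_windows k0 k_top (fun n le_nM => (b_window n le_nM).2).
exists p; split=> //; split; apply: eq_from_tnth => i; rewrite tnth_mktuple (tnth_nth 0%R).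
  by rewrite (counts i (ltn_ord i)).1 gez0_abs.
by rewrite (counts i (ltn_ord i)).2 gez0_abs // (b_window i (ltn_ord i)).1.
Qed.
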